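(* Let $(M,g)$ be a 5-dimensional Lorentzian manifold, $p\in M$, and suppose the Weyl tensor at $p$ is of primary alignment type II, with respect to a null frame $(\ell,n,m_3,m_4,m_5)$ in which all positive boost weight Weyl components vanish and the boost weight $0$ components are not all zero. With $w_i=\tfrac12\varepsilon_{ijk}C_{01jk}$, $H_{ij}=\sum_kC_{kikj}$, $R=\sum_iH_{ii}$, $S_{ij}=H_{ij}-\tfrac13R\delta_{ij}$, choose the $m_i$ so that $S=\mathrm{diag}(S_3,S_4,S_5)$ and put $R_i=S_i+\tfrac13 R$. Define $$M=\begin{bmatrix}-\tfrac{R_3}{2}&-\tfrac{w_5}{2}&\tfrac{w_4}{2}\\ \tfrac{w_5}{2}&-\tfrac{R_4}{2}&-\tfrac{w_3}{2}\\ -\tfrac{w_4}{2}&\tfrac{w_3}{2}&-\tfrac{R_5}{2}\end{bmatrix},\qquad \Omega=\begin{bmatrix}\tfrac R2&-w_3&-w_4&-w_5\\ w_3&\tfrac R2-R_3&0&0\\ w_4&0&\tfrac R2-R_4&0\\ w_5&0&0&\tfrac R2-R_5\end{bmatrix}.$$ If $\Omega$ has a single eigenvalue of algebraic multiplicity $4$, then either the Weyl operator $\mathsf C:F^{ab}\mapsto\tfrac12C^{ab}{}_{cd}F^{cd}$ on $\wedge^2T_pM$ is nilpotent, or the characteristic polynomial of $M$ has a pair of non-real complex conjugate roots.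
   Context: A null frame $(\ell,n,m_i)$, $i=3,4,5$, consists of null vectors $\ell,n$ with $g(\ell,n)=1$ and orthonormal spacelike $m_i$ orthogonal to $\ell,n$; frame index $0$ refers to $\ell$, $1$ to $n$, and $i,j,k\in\{3,4,5\}$ to the $m_i$; the boost weight of a component is the number of $0$-indices minus the number of $1$-indices. $\varepsilon_{ijk}$ is the sign of the permutation $(ijk)$ of $(345)$. *)

From HB Require Import structures.
From mathcomp Require Import all_boot all_order all_algebra.
From mathcomp Require Import reals.
From mathcomp.real_closed Require Export complex.
Set Implicit Arguments. Unset Strict Implicit. Unset Printing Implicit Defensive.
Import Order.TTheory GRing.Theory Num.Theory.
Local Open Scope ring_scope.

(* Null frame indices: ordinal 0 = l, 1 = n, 2,3,4 = m_3, m_4, m_5. *)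
Definition sp (i : 'I_3) : 'I_5 := inord (i + 2).

Section Weyl.
Variable R : realType.

(* components g(e_a, e_b) of the metric in the null frame (its inverse is the same matrix) *)
Definition gN (a b : 'I_5) : R :=
  if ((val a == 0%N) && (val b == 1%N)) || ((val a == 1%N) && (val b == 0%N)) then 1
  else if (a == b) && (2 <= val a)%N then 1 else 0.

(* boost weight of a component C_{abcd}: #0-indices - #1-indices *)
Definition bw (a b c d : 'I_5) : int :=
  (count (fun x : 'I_5 => val x == 0%N) [:: a; b; c; d])%:Z
  - (count (fun x : 'I_5 => val x == 1%N) [:: a; b; c; d])%:Z.

Definition is_weyl (C : 'I_5 -> 'I_5 -> 'I_5 -> 'I_5 -> R) : Prop :=
  [/\ (forall a b c d, C a b c d = - C b a c d),
      (forall a b c d, C a b c d = C c d a b),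
      (forall a b c d, C a b c d + C a c d b + C a d b c = 0)
    & (forall b d, \sum_(a < 5) \sum_(c < 5) gN a c * C a b c d = 0)].

(* epsilon_{ijk}, sign of the permutation (ijk) of (345); spatial indices 0,1,2 <-> 3,4,5 *)
Definition eps (i j k : 'I_3) : R :=
  let t := (val i, val j, val k) in
  if (t == (0,1,2)%N) || (t == (1,2,0)%N) || (t == (2,0,1)%N) then 1
  else if (t == (0,2,1)%N) || (t == (2,1,0)%N) || (t == (1,0,2)%N) then -1
  else 0.

Variable C : 'I_5 -> 'I_5 -> 'I_5 -> 'I_5 -> R.

Definition l0 : 'I_5 := inord 0.
Definition n1 : 'I_5 := inord 1.

Definition wv (i : 'I_3) : R :=
  2^-1 * \sum_(j < 3) \sum_(k < 3) eps i j k * C l0 n1 (sp j) (sp k).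
Definition Hm (i j : 'I_3) : R := \sum_(k < 3) C (sp k) (sp i) (sp k) (sp j).
Definition Rs : R := \sum_(i < 3) Hm i i.
Definition Sm (i j : 'I_3) : R := Hm i j - 3^-1 * Rs * (i == j)%:R.
Definition Ri (i : 'I_3) : R := Sm i i + 3^-1 * Rs.

Definition mx_of_seq (m n : nat) (s : seq (seq R)) : 'M[R]_(m, n) :=
  \matrix_(i < m, j < n) nth 0 (nth [::] s i) j.

Let w3 := wv 0. Let w4 := wv 1. Let w5 := wv 2.
Let R3 := Ri 0. Let R4 := Ri 1. Let R5 := Ri 2.

Definition Mmx : 'M[R]_3 := mx_of_seq 3 3
  [:: [:: - R3 / 2; - w5 / 2; w4 / 2];
      [:: w5 / 2; - R4 / 2; - w3 / 2];
      [:: - w4 / 2; w3 / 2; - R5 / 2]].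

Definition Omega : 'M[R]_4 := mx_of_seq 4 4
  [:: [:: Rs / 2; - w3; - w4; - w5];
      [:: w3; Rs / 2 - R3; 0; 0];
      [:: w4; 0; Rs / 2 - R4; 0];
      [:: w5; 0; 0; Rs / 2 - R5]].

Definition Cup (a b c d : 'I_5) : R :=
  \sum_(a' < 5) \sum_(b' < 5) gN a a' * gN b b' * C a' b' c d.

(* Weyl operator F^{ab} |-> 1/2 C^{ab}_{cd} F^{cd}, bivectors as 5x5 component matrices *)
Definition weyl_op (F : 'M[R]_5) : 'M[R]_5 :=
  \matrix_(a < 5, b < 5) (2^-1 * \sum_(c < 5) \sum_(d < 5) Cup a b c d * F c d).

(* nilpotent as an operator on wedge^2 (antisymmetric component matrices) *)
Definition weyl_op_nilpotent : Prop :=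
  exists k : nat, forall F : 'M[R]_5, F^T = - F -> iter k weyl_op F = 0.

End Weyl.

(* The Weyl operator respects the filtration of bivectors by boost weight.  Since all positive
   boost weight components of C vanish, it acts on the components F^{1i} through the matrix M, on
   (F^{01}, F^{ij}) modulo the former through Omega^T, and on F^{0i} modulo both through M^T; the
   identification of these blocks uses the cyclic identity, tracelessness and the diagonality of S.
   Hence the Weyl operator is nilpotent as soon as M and Omega are.
   If char Omega = (X - lam)^4, comparing its two top coefficients gives tr M = -2 lam and
   e2(M) = 3 lam^2 / 2.  A real cubic X^3 + 2 lam X^2 + 3/2 lam^2 X - d has a pair of non-real roots
   unless lam = d = 0: at any real root u the deflated quadratic has discriminant
   -(2 (lam + u)^2 + u^2) < 0.  If lam = det M = 0, both characteristic polynomials are powers of X,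
   and Cayley-Hamilton makes M and Omega nilpotent. *)

From HB Require Import structures.
From mathcomp Require Import all_boot all_order all_algebra.
From mathcomp Require Import reals.
From mathcomp.real_closed Require Import complex.
From mathcomp Require Import ring lra.
Import Order.TTheory GRing.Theory Num.Theory.

Local Open Scope ring_scope.

Definition j0 : 'I_3 := @Ordinal 3 0 isT.
Definition j1 : 'I_3 := @Ordinal 3 1 isT.
Definition j2 : 'I_3 := @Ordinal 3 2 isT.
Definition k0 : 'I_4 := @Ordinal 4 0 isT.
Definition k1 : 'I_4 := @Ordinal 4 1 isT.
Definition k2 : 'I_4 := @Ordinal 4 2 isT.
Definition k3 : 'I_4 := @Ordinal 4 3 isT.

(* [2 : 'I_3] is [1 *+ 2], so the numeral 2 must be rewritten before 1. *)
Lemma ord3_numerals : [/\ 2 = j2, 1 = j1 & 0 = j0].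
Proof. by split; apply: val_inj. Qed.

Lemma ord3P (i : 'I_3) : [\/ i = j0, i = j1 | i = j2].
Proof.
by case: i => [[|[|[|//]]] ?]; [apply: Or31 | apply: Or32 | apply: Or33]; apply: val_inj.
Qed.

Lemma ord4P (i : 'I_4) : [\/ i = k0, i = k1, i = k2 | i = k3].
Proof.
by case: i => [[|[|[|[|//]]]] ?]; [apply: Or41 | apply: Or42 | apply: Or43 | apply: Or44];
  apply: val_inj.
Qed.

Lemma sum_ord3 (V : nmodType) (f : 'I_3 -> V) : \sum_(i < 3) f i = f j0 + f j1 + f j2.
Proof.
by rewrite !big_ord_recr big_ord0 /= add0r; congr (_ + _ + _); congr f; apply: val_inj.
Qed.

Lemma sum_ord4 (V : nmodType) (f : 'I_4 -> V) :
  \sum_(i < 4) f i = f k0 + f k1 + f k2 + f k3.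
Proof.
by rewrite !big_ord_recr big_ord0 /= add0r; congr (_ + _ + _ + _); congr f; apply: val_inj.
Qed.

(* Entries addressed by natural numbers, so that the ordinals produced by [expand_det_row] and
   [big_ord_recr] all normalise to numerals. *)
Definition entry {T : Type} {n} (A : 'M[T]_n.+1) (i j : nat) : T := A (inord i) (inord j).

Lemma entryE {T : Type} {n} (A : 'M[T]_n.+1) i j : A i j = entry A i j.
Proof. by rewrite /entry !inord_val. Qed.

Lemma inord_eq n m k :
  (m <= n)%N -> (k <= n)%N -> (inord m == inord k :> 'I_n.+1) = (m == k).
Proof. by move=> hm hk; rewrite -val_eqE /= !inordK. Qed.

Definition minor2_sum {R : comNzRingType} {n} (A : 'M[R]_n) : R :=
  \sum_(i < n) \sum_(j < n | (i < j)%N) (A i i * A j j - A i j * A j i).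

Definition minor3 {R : comNzRingType} (A : 'M[R]_4) (a b c x y z : nat) : R :=
  entry A a x * (entry A b y * entry A c z - entry A b z * entry A c y)
  - entry A a y * (entry A b x * entry A c z - entry A b z * entry A c x)
  + entry A a z * (entry A b x * entry A c y - entry A b y * entry A c x).

Section SmallMatrices.
Variable R : comNzRingType.

Lemma det_mx22 (A : 'M[R]_2) :
  \det A = entry A 0 0 * entry A 1 1 - entry A 0 1 * entry A 1 0.
Proof.
rewrite (expand_det_row A 0) !big_ord_recr big_ord0 /= /cofactor !det_mx11.
by rewrite !mxE !entryE /=; ring.
Qed.

Lemma det_mx33 (A : 'M[R]_3) :
  \det A = entry A 0 0 * (entry A 1 1 * entry A 2 2 - entry A 1 2 * entry A 2 1)
         - entry A 0 1 * (entry A 1 0 * entry A 2 2 - entry A 1 2 * entry A 2 0)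
         + entry A 0 2 * (entry A 1 0 * entry A 2 1 - entry A 1 1 * entry A 2 0).
Proof.
rewrite (expand_det_row A 0) !big_ord_recr big_ord0 /= /cofactor !det_mx22.
by rewrite /entry !mxE !entryE /= !inordK //= /bump /=; ring.
Qed.

Lemma det_mx44 (A : 'M[R]_4) :
  \det A = entry A 0 0 * minor3 A 1 2 3 1 2 3 - entry A 0 1 * minor3 A 1 2 3 0 2 3
         + entry A 0 2 * minor3 A 1 2 3 0 1 3 - entry A 0 3 * minor3 A 1 2 3 0 1 2.
Proof.
rewrite (expand_det_row A 0) !big_ord_recr big_ord0 /= /cofactor !det_mx33.
by rewrite /minor3 /entry !mxE !entryE /= !inordK //= /bump /=; ring.
Qed.

Lemma mxtrace3 (A : 'M[R]_3) : \tr A = entry A 0 0 + entry A 1 1 + entry A 2 2.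
Proof. by rewrite /mxtrace sum_ord3 !entryE. Qed.

Lemma mxtrace4 (A : 'M[R]_4) :
  \tr A = entry A 0 0 + entry A 1 1 + entry A 2 2 + entry A 3 3.
Proof. by rewrite /mxtrace sum_ord4 !entryE. Qed.

Lemma minor2_sum3 (A : 'M[R]_3) : minor2_sum A =
  entry A 0 0 * entry A 1 1 - entry A 0 1 * entry A 1 0
  + (entry A 0 0 * entry A 2 2 - entry A 0 2 * entry A 2 0)
  + (entry A 1 1 * entry A 2 2 - entry A 1 2 * entry A 2 1).
Proof.
rewrite /minor2_sum; under eq_bigr => i _ do rewrite big_mkcond sum_ord3.
by rewrite sum_ord3 /= !entryE /=; ring.
Qed.

Lemma minor2_sum4 (A : 'M[R]_4) : minor2_sum A =
  entry A 0 0 * entry A 1 1 - entry A 0 1 * entry A 1 0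
  + (entry A 0 0 * entry A 2 2 - entry A 0 2 * entry A 2 0)
  + (entry A 0 0 * entry A 3 3 - entry A 0 3 * entry A 3 0)
  + (entry A 1 1 * entry A 2 2 - entry A 1 2 * entry A 2 1)
  + (entry A 1 1 * entry A 3 3 - entry A 1 3 * entry A 3 1)
  + (entry A 2 2 * entry A 3 3 - entry A 2 3 * entry A 3 2).
Proof.
rewrite /minor2_sum; under eq_bigr => i _ do rewrite big_mkcond sum_ord4.
by rewrite sum_ord4 /= !entryE /=; ring.
Qed.

End SmallMatrices.

Section CharPoly.
Variable R : comNzRingType.

Lemma char_poly_mx3 (A : 'M[R]_3) :
  char_poly A = 'X^3 - (\tr A)%:P * 'X^2 + (minor2_sum A)%:P * 'X - (\det A)%:P.
Proof.
rewrite /char_poly det_mx33 minor2_sum3 det_mx33 mxtrace3 /entry.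
by rewrite !mxE !inord_eq // !(mulr1n, mulr0n) !sub0r; ring.
Qed.

Lemma char_poly_mx4_coef2 (A : 'M[R]_4) : (char_poly A)`_2 = minor2_sum A.
Proof.
pose c1 := minor3 A 1 2 3 1 2 3 + minor3 A 0 2 3 0 2 3 + minor3 A 0 1 3 0 1 3
  + minor3 A 0 1 2 0 1 2.
have -> : char_poly A = 'X^4 - (\tr A)%:P * 'X^3 + (minor2_sum A)%:P * 'X^2
    - c1%:P * 'X + (\det A)%:P.
  rewrite /char_poly det_mx44 det_mx44 mxtrace4 minor2_sum4 /c1 /minor3 /entry.
  by rewrite !mxE !inord_eq // !(mulr1n, mulr0n) !sub0r; ring.
by rewrite !(coefD, coefB, coefN, coefCM, coefXn, coefX, coefC) /=; ring.
Qed.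

Lemma char_poly_Xn_nilpotent n (A : 'M[R]_n.+1) :
  char_poly A = 'X ^+ n.+1 -> A ^+ n.+1 = 0.
Proof. by move=> hA; have := Cayley_Hamilton A; rewrite hA rmorphXn /= horner_mx_X. Qed.

Lemma trmxX n (A : 'M[R]_n.+1) k : (A^T) ^+ k = (A ^+ k)^T.
Proof.
elim: k => [|k IH]; first by rewrite !expr0 trmx1.
by rewrite exprS IH exprSr -!mulmxE trmx_mul.
Qed.

End CharPoly.

Lemma char_poly4_single_root {F : numFieldType} {K : fieldType}
    {f : {rmorphism F -> K}} {A : 'M[F]_4} {lam : K} :
  map_poly f (char_poly A) = ('X - lam%:P) ^+ 4 ->
  lam = f (\tr A / 4) /\ minor2_sum A = 3 * (\tr A) ^+ 2 / 8.
Proof.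
move=> hA.
have expand : ('X - lam%:P) ^+ 4 = 'X^4 - (4 * lam)%:P * 'X^3 + (6 * lam ^+ 2)%:P * 'X^2
    - (4 * lam ^+ 3)%:P * 'X + (lam ^+ 4)%:P by ring.
have coef k : f (char_poly A)`_k = (('X - lam%:P) ^+ 4)`_k by rewrite -hA coef_map.
have := coef 3%N; have := coef 2%N.
rewrite expand char_poly_mx4_coef2 (char_poly_trace A isT) rmorphN.
rewrite !(coefD, coefB, coefN, coefCM, coefXn, coefX, coefC) /=.
rewrite !(mulr0, mulr1, oppr0, addr0, add0r, subr0, sub0r) => h2 /oppr_inj h3.
have four : (4 : K) != 0 by rewrite -(rmorph_nat f) fmorph_eq0 pnatr_eq0.
have lamE : lam = f (\tr A / 4) by rewrite fmorph_div rmorph_nat h3 mulrC mulKf.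
split=> //; apply: (fmorph_inj f).
have -> : 3 * \tr A ^+ 2 / 8 = 6 * (\tr A / 4) ^+ 2 by field.
by rewrite h2 lamE -rmorphXn -(rmorph_nat f 6) -rmorphM.
Qed.

(** * Real cubics *)

Section RealCubic.
Variable R : rcfType.
Local Notation toC := (real_complex R).

Lemma root_map_real_conjc (p : {poly R}) (z : R[i]) :
  root (map_poly toC p) z -> root (map_poly toC p) z^*%C.
Proof.
suff conjP : map_poly conjc (map_poly toC p) = map_poly toC p.
  by rewrite -complex_root_conj conjP.
rewrite -map_poly_comp; apply: eq_map_poly => y /=.
by apply/eqP; rewrite eq_complex /= oppr0 !eqxx.
Qed.

Lemma real_cubic_nonreal_root (t s d : R) :
  (forall u, u ^+ 3 - t * u ^+ 2 + s * u - d = 0 ->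
     (u - t) ^+ 2 < 4 * (s - t * u + u ^+ 2)) ->
  exists z : R[i], complex.Im z != 0 /\
    root (map_poly toC ('X^3 - t%:P * 'X^2 + s%:P * 'X - d%:P)) z.
Proof.
move=> hdisc; set P := map_poly _ _.
have hornerP z : P.[z] = z ^+ 3 - toC t * z ^+ 2 + toC s * z - toC d.
  rewrite /P !rmorphB !rmorphD !rmorphN !rmorphXn !rmorphM ?rmorphXn [LHS]/=.
  by rewrite map_polyX !map_polyC !hornerE.
have [x hx] := @solve_monicpoly R[i] 3 (nth 0 [:: toC d; - toC s; toC t]) isT.
have /eqP rootx : P.[x] == 0.
  by rewrite hornerP hx !big_ord_recr big_ord0 /= expr0 expr1 add0r; apply/eqP; ring.
have [Imx0|] := eqVneq (complex.Im x) 0; last by exists x; rewrite /root rootx.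
pose u := complex.Re x.
have xE : x = toC u by rewrite [x]complexE Imx0 mulr0 addr0.
have rootu : u ^+ 3 - t * u ^+ 2 + s * u - d = 0.
  by apply: (@fmorph_inj _ _ toC); rewrite rmorph0 -rootx hornerP xE; ring.
pose q := s - t * u + u ^+ 2.
have disc_pos : 0 < q - (u - t) ^+ 2 / 4 by have := hdisc u rootu; rewrite /q; lra.
pose v := Num.sqrt (q - (u - t) ^+ 2 / 4).
have v2 : v ^+ 2 = q - (u - t) ^+ 2 / 4 by rewrite sqr_sqrtr // ltW.
have v_neq0 : v != 0 by rewrite sqrtr_eq0 -ltNge.
exists (Complex ((t - u) / 2) v); split => //.
set z := Complex _ _.
have zE : z + toC ((u - t) / 2) = 'i%C * toC v.
  by rewrite [z]complexE /=; apply: (@addIr _ (- toC ((u - t) / 2))); ring.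
have factor : P.[z] = (z - toC u) * ((z + toC ((u - t) / 2)) ^+ 2 + toC (q - (u - t) ^+ 2 / 4))
    + toC (u ^+ 3 - t * u ^+ 2 + s * u - d).
  by rewrite hornerP /q; field.
by rewrite /root factor rootu zE exprMn sqr_i -v2 rmorphXn mulN1r addNr mulr0 rmorph0 addr0.
Qed.

Lemma cubic_nonreal_conj_roots (t s d : R) :
  s = 3 * t ^+ 2 / 8 -> (t != 0) || (d != 0) ->
  let P := map_poly toC ('X^3 - t%:P * 'X^2 + s%:P * 'X - d%:P) in
  exists z : R[i], complex.Im z != 0 /\ root P z /\ root P z^*%C.
Proof.
move=> sE td_neq0 P.
suff [z [Imz rootz]] : exists z : R[i], complex.Im z != 0 /\ root P z.
  by exists z; split; [|split; last exact: root_map_real_conjc].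
apply: real_cubic_nonreal_root => u rootu.
have gap : 4 * (s - t * u + u ^+ 2) - (u - t) ^+ 2 = (t - 2 * u) ^+ 2 / 2 + u ^+ 2.
  by rewrite sE; field.
have [u0 | u_neq0] := eqVneq u 0.
  have d0 : d = 0 by move: rootu; rewrite u0 expr0n /=; lra.
  move: td_neq0; rewrite d0 eqxx orbF => t_neq0.
  have : 0 < t ^+ 2 by rewrite lt0r sqr_ge0 andbT expf_neq0.
  by move: gap; rewrite u0; lra.
have : 0 < u ^+ 2 by rewrite lt0r sqr_ge0 andbT expf_neq0.
have : 0 <= (t - 2 * u) ^+ 2 by rewrite sqr_ge0.
lra.
Qed.

End RealCubic.

Section IteratedRowAction.
Context {K : pzRingType} {V : Type} {T : V -> V} {inv : V -> Prop}.
Hypothesis invT : forall F, inv F -> inv (T F).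

Lemma iter_inv k {F : V} : inv F -> inv (iter k T F).
Proof. by move=> hF; elim: k => //= k; apply: invT. Qed.

Lemma iter_row_nilpotent {m} {p : V -> 'rV[K]_m.+1} {B : 'M[K]_m.+1} {k} :
  (forall F, inv F -> p (T F) = p F *m B) -> B ^+ k = 0 ->
  forall F, inv F -> p (iter k T F) = 0.
Proof.
move=> pT Bk F hF; suff -> : p (iter k T F) = p F *m B ^+ k by rewrite Bk mulmx0.
elim: k {Bk} => [|k IH]; first by rewrite expr0 mulmx1.
by rewrite /= pT; [rewrite IH exprSr mulmxA | exact: iter_inv].
Qed.

End IteratedRowAction.

Definition el : 'I_5 := @Ordinal 5 0 isT.
Definition en : 'I_5 := @Ordinal 5 1 isT.
Definition e3 : 'I_5 := @Ordinal 5 2 isT.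
Definition e4 : 'I_5 := @Ordinal 5 3 isT.
Definition e5 : 'I_5 := @Ordinal 5 4 isT.

Lemma ord5P (a : 'I_5) : a = el \/ a = en \/ a = e3 \/ a = e4 \/ a = e5.
Proof.
case: a => [[|[|[|[|[|//]]]]] ?];
  [left | right; left | do 2 right; left | do 3 right; left | do 4 right];
  exact: val_inj.
Qed.

Lemma sum_ord5 (V : nmodType) (f : 'I_5 -> V) :
  \sum_(a < 5) f a = f el + f en + f e3 + f e4 + f e5.
Proof.
rewrite !big_ord_recr big_ord0 /= add0r.
by congr (_ + _ + _ + _ + _); congr f; apply: val_inj.
Qed.

Lemma sp_frame : [/\ sp j0 = e3, sp j1 = e4 & sp j2 = e5].
Proof. by split; apply: val_inj; rewrite /= inordK. Qed.

Lemma l0_n1_frame : l0 = el /\ n1 = en.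
Proof. by split; apply: val_inj; rewrite /= inordK. Qed.

(* Raising an index with [gN] exchanges l and n and fixes the m_i. *)
Definition raise (a : 'I_5) : 'I_5 :=
  if val a == 0%N then en else if val a == 1%N then el else a.

Lemma sum_gN_raise (R : realType) (a : 'I_5) (f : 'I_5 -> R) :
  \sum_(b < 5) gN R a b * f b = f (raise a).
Proof.
by rewrite sum_ord5; case: (ord5P a) => [->|[->|[->|[->|->]]]]; rewrite /gN /raise /=; ring.
Qed.

Lemma weyl_opE (R : realType) (C : 'I_5 -> 'I_5 -> 'I_5 -> 'I_5 -> R) (F : 'M[R]_5) a b :
  weyl_op C F a b = 2^-1 * \sum_(c < 5) \sum_(d < 5) C (raise a) (raise b) c d * F c d.
Proof.
rewrite /weyl_op mxE; congr (_ * _); apply: eq_bigr => c _; apply: eq_bigr => d _.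
rewrite /Cup; congr (_ * _).
under eq_bigr => a' _ do (under eq_bigr => b' _ do rewrite -mulrA; rewrite -big_distrr /=).
by rewrite sum_gN_raise sum_gN_raise.
Qed.

Section WeylIdentities.
Context {R : realType} {C : 'I_5 -> 'I_5 -> 'I_5 -> 'I_5 -> R}.
Hypothesis weylC : is_weyl C.

Lemma weyl_antiL a b c d : C a b c d = - C b a c d.
Proof. by case: weylC. Qed.

Lemma weyl_pair a b c d : C a b c d = C c d a b.
Proof. by case: weylC. Qed.

Lemma weyl_antiR a b c d : C a b c d = - C a b d c.
Proof. by rewrite weyl_pair weyl_antiL weyl_pair. Qed.

Lemma weyl_orbit a b c d :
  C a b c d = - C b a c d /\ C a b c d = - C a b d c /\ C a b c d = C b a d c /\
  C a b c d = C c d a b /\ C a b c d = - C d c a b /\ C a b c d = - C c d b a /\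
  C a b c d = C d c b a.
Proof.
have aL := weyl_antiL; have aR := weyl_antiR; have p := weyl_pair.
do ![split] => //; first by rewrite aL aR opprK.
- by rewrite p aL.
- by rewrite p aR.
- by rewrite p aL aR opprK.
Qed.

Lemma weyl_bianchi a b c d : C a b c d + C a c d b + C a d b c = 0.
Proof. by case: weylC. Qed.

Lemma weyl_traceless b d :
  C el b en d + C en b el d + C e3 b e3 d + C e4 b e4 d + C e5 b e5 d = 0.
Proof.
case: weylC => _ _ _ /(_ b d); rewrite (eq_bigr (fun a => C a b (raise a) d)).
  by rewrite sum_ord5.
by move=> a _; rewrite sum_gN_raise.
Qed.

Lemma weyl_lanb a b :
  2 * C el a en b = C el en a b - (C e3 a e3 b + C e4 a e4 b + C e5 a e5 b).
Proof.
have tr := weyl_traceless a b; have bi := weyl_bianchi el en a b.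
by rewrite (weyl_pair en) (weyl_antiR el a b) in tr bi; lra.
Qed.

End WeylIdentities.

(** * The Weyl operator on boost weight blocks *)

Section BoostWeightBlocks.
Context {R : realType} (C : 'I_5 -> 'I_5 -> 'I_5 -> 'I_5 -> R).

Definition skew (F : 'M[R]_5) : Prop := F^T = - F.

(* The components F^{01}, F^{45}, F^{53}, F^{34}, in the order of the rows of [Omega]. *)
Definition mid_pair (k : 'I_4) : 'I_5 * 'I_5 :=
  nth (el, en) [:: (el, en); (e4, e5); (e5, e3); (e3, e4)] k.

Definition part_n (F : 'M[R]_5) : 'rV[R]_3 := \row_j F en (sp j).
Definition part_0 (F : 'M[R]_5) : 'rV[R]_4 := \row_k F (mid_pair k).1 (mid_pair k).2.
Definition part_l (F : 'M[R]_5) : 'rV[R]_3 := \row_j F el (sp j).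

Definition block_n : 'M[R]_3 := \matrix_(j, i) C el (sp i) en (sp j).
Definition block_0 : 'M[R]_4 :=
  \matrix_(k, k') C (raise (mid_pair k').1) (raise (mid_pair k').2) (mid_pair k).1 (mid_pair k).2.
Definition block_l : 'M[R]_3 := \matrix_(j, i) C en (sp i) el (sp j).

Lemma skewE {F : 'M[R]_5} : skew F -> forall a b, F a b = - F b a.
Proof. by move=> hF a b; have := congr1 (fun M : 'M[R]_5 => M b a) hF; rewrite !mxE. Qed.

Lemma skew_diag {F : 'M[R]_5} : skew F -> forall a, F a a = 0.
Proof.
by move=> hF a; apply/eqP; rewrite -[_ == 0](mulrn_eq0 _ 2) mulr2n {1}(skewE hF) addNr.
Qed.

Ltac orient hF :=
  rewrite ?(skew_diag hF) ?(skewE hF en el) ?(skewE hF e3 el) ?(skewE hF e4 el)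
    ?(skewE hF e5 el) ?(skewE hF e3 en) ?(skewE hF e4 en) ?(skewE hF e5 en)
    ?(skewE hF e5 e4) ?(skewE hF e3 e5) ?(skewE hF e4 e3).

Lemma part_n_eq0 F : part_n F = 0 -> [/\ F en e3 = 0, F en e4 = 0 & F en e5 = 0].
Proof.
case: sp_frame => s0 s1 s2 h; have e j := congr1 (fun v : 'rV[R]_3 => v 0 j) h.
by move: (e j0) (e j1) (e j2); rewrite !mxE s0 s1 s2.
Qed.

Lemma part_0_eq0 F :
  part_0 F = 0 -> [/\ F el en = 0, F e4 e5 = 0, F e5 e3 = 0 & F e3 e4 = 0].
Proof.
move=> h; have e k := congr1 (fun v : 'rV[R]_4 => v 0 k) h.
by move: (e k0) (e k1) (e k2) (e k3); rewrite !mxE.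
Qed.

Lemma part_l_eq0 F : part_l F = 0 -> [/\ F el e3 = 0, F el e4 = 0 & F el e5 = 0].
Proof.
case: sp_frame => s0 s1 s2 h; have e j := congr1 (fun v : 'rV[R]_3 => v 0 j) h.
by move: (e j0) (e j1) (e j2); rewrite !mxE s0 s1 s2.
Qed.

Lemma skew_parts_eq0 F :
  skew F -> part_n F = 0 -> part_0 F = 0 -> part_l F = 0 -> F = 0.
Proof.
move=> hF /part_n_eq0[n3 n4 n5] /part_0_eq0[z1 z2 z3 z4] /part_l_eq0[l3 l4 l5].
apply/matrixP => a b; rewrite mxE.
case: (ord5P a) => [->|[->|[->|[->|->]]]]; case: (ord5P b) => [->|[->|[->|[->|->]]]];
  by orient hF; rewrite ?n3 ?n4 ?n5 ?z1 ?z2 ?z3 ?z4 ?l3 ?l4 ?l5 ?oppr0.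
Qed.

Hypothesis weylC : is_weyl C.

Lemma weyl_op_skew F : skew (weyl_op C F).
Proof.
apply/matrixP => a b; rewrite [LHS]mxE [RHS]mxE !weyl_opE -mulrN -sumrN.
congr (_ * _); apply: eq_bigr => c _; rewrite -sumrN; apply: eq_bigr => d _.
by rewrite (weyl_antiL weylC (raise b)) mulNr.
Qed.

Hypothesis typeII : forall a b c d, (0 < bw a b c d)%R -> C a b c d = 0.

Ltac expand_weyl_op hF :=
  rewrite !sum_ord5 /raise /=; orient hF;
  repeat match goal with |- context [C ?a ?b ?c ?d] =>
    rewrite (typeII a b c d); last by [] end.

Lemma part_n_weyl_op F : skew F -> part_n (weyl_op C F) = part_n F *m block_n.
Proof.
case: sp_frame => s0 s1 s2 hF.
apply/rowP => i; rewrite mxE weyl_opE !mxE sum_ord3 !mxE.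
by case: (ord3P i) => ->; rewrite ?s0 ?s1 ?s2; expand_weyl_op hF;
  rewrite ?(weyl_antiR weylC _ _ e3 en) ?(weyl_antiR weylC _ _ e4 en)
    ?(weyl_antiR weylC _ _ e5 en); field.
Qed.

Lemma part_0_weyl_op F :
  skew F -> part_n F = 0 -> part_0 (weyl_op C F) = part_0 F *m block_0.
Proof.
move=> hF /part_n_eq0[n3 n4 n5].
apply/rowP => k; rewrite mxE weyl_opE !mxE sum_ord4 !mxE.
by case: (ord4P k) => ->; expand_weyl_op hF; rewrite ?n3 ?n4 ?n5;
  rewrite ?(weyl_antiR weylC _ _ e3 en) ?(weyl_antiR weylC _ _ e4 en)
    ?(weyl_antiR weylC _ _ e5 en) ?(weyl_antiR weylC _ _ en el)
    ?(weyl_antiR weylC _ _ e4 e3) ?(weyl_antiR weylC _ _ e3 e5)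
    ?(weyl_antiR weylC _ _ e5 e4); field.
Qed.

Lemma part_l_weyl_op F : skew F -> part_n F = 0 -> part_0 F = 0 ->
  part_l (weyl_op C F) = part_l F *m block_l.
Proof.
case: sp_frame => s0 s1 s2 hF /part_n_eq0[n3 n4 n5] /part_0_eq0[z1 z2 z3 z4].
apply/rowP => i; rewrite mxE weyl_opE !mxE sum_ord3 !mxE.
by case: (ord3P i) => ->; rewrite ?s0 ?s1 ?s2; expand_weyl_op hF;
  rewrite ?n3 ?n4 ?n5 ?z1 ?z2 ?z3 ?z4;
  rewrite ?(weyl_antiR weylC _ _ e3 el) ?(weyl_antiR weylC _ _ e4 el)
    ?(weyl_antiR weylC _ _ e5 el); field.
Qed.

Lemma weyl_op_nilpotent_of_blocks :
  block_n ^+ 3 = 0 -> block_0 ^+ 4 = 0 -> block_l ^+ 3 = 0 -> weyl_op_nilpotent C.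
Proof.
move=> hn h0 hl; exists (3 + 4 + 3)%N => F hF; rewrite !iterD.
pose inv_0 (G : 'M[R]_5) := skew G /\ part_n G = 0.
pose inv_l (G : 'M[R]_5) := [/\ skew G, part_n G = 0 & part_0 G = 0].
have skewT G : skew G -> skew (weyl_op C G) by move=> _; apply: weyl_op_skew.
have inv_0T G : inv_0 G -> inv_0 (weyl_op C G).
  by case=> hG hn0; split; [apply: weyl_op_skew | rewrite part_n_weyl_op // hn0 mul0mx].
have inv_lT G : inv_l G -> inv_l (weyl_op C G).
  case=> hG hn0 h00; split; first exact: weyl_op_skew.
    by rewrite part_n_weyl_op // hn0 mul0mx.
  by rewrite part_0_weyl_op // h00 mul0mx.
set G1 := iter 3 _ F; set G2 := iter 4 _ G1.
have hG1 : inv_0 G1.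
  by split; [exact: (iter_inv skewT) | exact: (iter_row_nilpotent skewT part_n_weyl_op hn)].
have hG2 : inv_l G2.
  have [? ?] := iter_inv inv_0T 4 hG1.
  split=> //; apply: (iter_row_nilpotent inv_0T _ h0) => // G [? ?].
  exact: part_0_weyl_op.
have [? ? ?] := iter_inv inv_lT 3 hG2.
apply: skew_parts_eq0 => //; apply: (iter_row_nilpotent inv_lT _ hl) => // G [? ? ?].
exact: part_l_weyl_op.
Qed.

End BoostWeightBlocks.

(** * The blocks in the frame diagonalising S *)

Ltac spatial_numerals := rewrite /Mmx /Omega; case: ord3_numerals => -> -> ->.

Section SpatialCurvature.
Context {R : realType} (C : 'I_5 -> 'I_5 -> 'I_5 -> 'I_5 -> R).

Lemma Ri_Hm i : Ri C i = Hm C i i.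
Proof. by rewrite /Ri /Sm eqxx /=; ring. Qed.

Lemma Rs_sum : Rs C = Ri C j0 + Ri C j1 + Ri C j2.
Proof. by rewrite /Rs sum_ord3 !Ri_Hm. Qed.

Lemma mxtrace_Mmx : \tr (Mmx C) = - Rs C / 2.
Proof.
by rewrite mxtrace3 Rs_sum /entry; spatial_numerals; rewrite !mxE /= !inordK //=; field.
Qed.

Lemma mxtrace_Omega : \tr (Omega C) = Rs C.
Proof.
by rewrite mxtrace4 /entry; spatial_numerals; rewrite !mxE /= !inordK //= Rs_sum; field.
Qed.

Lemma minor2_sum_Omega : minor2_sum (Omega C) = 4 * minor2_sum (Mmx C).
Proof.
rewrite minor2_sum4 minor2_sum3 /entry; spatial_numerals.
by rewrite !mxE /= !inordK //= Rs_sum; field.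
Qed.

End SpatialCurvature.

Section FrameComponents.
Context {R : realType} {C : 'I_5 -> 'I_5 -> 'I_5 -> 'I_5 -> R}.
Hypothesis weylC : is_weyl C.

Lemma wv_frame :
  [/\ wv C j0 = C el en e4 e5, wv C j1 = C el en e5 e3 & wv C j2 = C el en e3 e4].
Proof.
case: sp_frame => s0 s1 s2; rewrite /wv; case: l0_n1_frame => -> ->.
rewrite !sum_ord3 /eps /= s0 s1 s2.
have aR := weyl_antiR weylC.
by split; rewrite ?(aR _ _ e5 e4) ?(aR _ _ e3 e5) ?(aR _ _ e4 e3); field.
Qed.

Lemma Ri_frame : [/\ Ri C j0 = C e4 e3 e4 e3 + C e5 e3 e5 e3,
                     Ri C j1 = C e3 e4 e3 e4 + C e5 e4 e5 e4
                   & Ri C j2 = C e3 e5 e3 e5 + C e4 e5 e4 e5].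
Proof.
case: sp_frame => s0 s1 s2; rewrite !Ri_Hm /Hm !sum_ord3 s0 s1 s2.
have aL := weyl_antiL weylC.
have := aL e3 e3 e3 e3; have := aL e4 e4 e4 e4; have := aL e5 e5 e5 e5.
by move=> *; split; lra.
Qed.

Lemma weyl_lnln : C el en el en = - Rs C / 2.
Proof.
have tr := weyl_traceless weylC el en.
have s3 := weyl_lanb weylC e3 e3; have s4 := weyl_lanb weylC e4 e4.
have s5 := weyl_lanb weylC e5 e5.
rewrite Rs_sum; have [-> -> ->] := Ri_frame.
have o := weyl_orbit weylC.
have := o el el en en; have := o en el el en; have := o e3 el e3 en; have := o e4 el e4 en;
have := o e5 el e5 en; have := o el en e3 e3; have := o el en e4 e4; have := o el en e5 e5;
have := o e3 e3 e3 e3; have := o e4 e4 e4 e4; have := o e5 e5 e5 e5.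
by move=> *; lra.
Qed.

Hypothesis S_diag : forall i j : 'I_3, i != j -> Sm C i j = 0.

Lemma Hm_offdiag_frame : [/\ C e5 e3 e5 e4 = 0, C e4 e3 e4 e5 = 0 & C e3 e4 e3 e5 = 0].
Proof.
case: sp_frame => s0 s1 s2.
have := S_diag j0 j1 isT; have := S_diag j0 j2 isT; have := S_diag j1 j2 isT.
rewrite /Sm /Hm !sum_ord3 s0 s1 s2 /= !mulr0 !subr0.
have aL := weyl_antiL weylC; have aR := weyl_antiR weylC.
have := aL e3 e3 e3 e4; have := aR e4 e3 e4 e4; have := aL e3 e3 e3 e5;
have := aR e5 e3 e5 e5; have := aL e4 e4 e4 e5; have := aR e5 e4 e5 e5.
by move=> *; split; lra.
Qed.

Lemma block_n_Mmx : block_n C = Mmx C.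
Proof.
case: sp_frame => s0 s1 s2; have [w3 w4 w5] := wv_frame.
have [r3 r4 r5] := Ri_frame; have [h1 h2 h3] := Hm_offdiag_frame.
have o := weyl_orbit weylC.
apply/matrixP => j i; rewrite /Mmx; case: ord3_numerals => -> -> ->; rewrite !mxE.
case: (ord3P i) => ->; case: (ord3P j) => -> /=; rewrite ?s0 ?s1 ?s2 ?w3 ?w4 ?w5 ?r3 ?r4 ?r5;
match goal with |- C el ?a en ?b = _ =>
  have := weyl_lanb weylC a b; have := o el en a b; have := o a a a b; have := o b a b b;
  have := o e3 a e3 b; have := o e4 a e4 b; have := o e5 a e5 b end;
by move=> *; lra.
Qed.

Lemma block_0_Omega : block_0 C = (Omega C)^T.
Proof.
have [w3 w4 w5] := wv_frame; have [r3 r4 r5] := Ri_frame.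
have [h1 h2 h3] := Hm_offdiag_frame; have lnln := weyl_lnln.
have o := weyl_orbit weylC.
have o34 := o e3 e4 e3 e4; have o35 := o e3 e5 e3 e5; have o45 := o e4 e5 e4 e5.
apply/matrixP => k k'; rewrite /Omega; case: ord3_numerals => -> -> ->; rewrite !mxE Rs_sum.
case: (ord4P k) => ->; case: (ord4P k') => -> /=; rewrite /raise /= ?w3 ?w4 ?w5 ?r3 ?r4 ?r5;
match goal with |- C ?a ?b ?c ?d = _ => have := o a b c d end;
by move: lnln; rewrite Rs_sum ?r3 ?r4 ?r5; move=> *; lra.
Qed.

Lemma block_l_Mmx : block_l C = (Mmx C)^T.
Proof. by rewrite -block_n_Mmx; apply/matrixP => i j; rewrite !mxE weyl_pair. Qed.

End FrameComponents.

Theorem mainTheorem6 (R : realType) (C : 'I_5 -> 'I_5 -> 'I_5 -> 'I_5 -> R) :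
  is_weyl C ->
  (forall a b c d, (0 < bw a b c d)%R -> C a b c d = 0) ->
  (exists a b c d, bw a b c d = 0 /\ C a b c d <> 0) ->
  (forall i j : 'I_3, i != j -> Sm C i j = 0) ->
  (exists lam : R[i],
      map_poly (real_complex R) (char_poly (Omega C)) = ('X - lam%:P) ^+ 4) ->
  weyl_op_nilpotent C \/
  (exists z : R[i], complex.Im z != 0 /\
     root (map_poly (real_complex R) (char_poly (Mmx C))) z /\
     root (map_poly (real_complex R) (char_poly (Mmx C))) (conjc z)).
Proof.
move=> weylC typeII _ S_diag [lam char_Omega].
have [lamE minor_Omega] := char_poly4_single_root char_Omega.
have trOmega : \tr (Omega C) = - 2 * \tr (Mmx C).
  by rewrite mxtrace_Omega mxtrace_Mmx; field.
have minor_M : minor2_sum (Mmx C) = 3 * (\tr (Mmx C)) ^+ 2 / 8.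
  apply: (@mulfI _ 4); first by rewrite pnatr_eq0.
  by rewrite -minor2_sum_Omega minor_Omega trOmega; field.
rewrite char_poly_mx3.
have [nonzero | ] := boolP ((\tr (Mmx C) != 0) || (\det (Mmx C) != 0)).
  by right; apply: cubic_nonreal_conj_roots.
rewrite negb_or !negbK => /andP[/eqP tr0 /eqP det0]; left.
have charM : char_poly (Mmx C) = 'X^3.
  by rewrite char_poly_mx3 minor_M tr0 det0 expr0n /= !(mul0r, mulr0, subr0, addr0).
have charO : char_poly (Omega C) = 'X^4.
  apply: (map_poly_inj (real_complex R)); rewrite char_Omega lamE trOmega tr0 map_polyXn.
  by rewrite !(mulr0, mul0r, rmorph0, subr0).
apply: (weyl_op_nilpotent_of_blocks C weylC typeII).
- by rewrite block_n_Mmx // char_poly_Xn_nilpotent.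
- by rewrite block_0_Omega // trmxX char_poly_Xn_nilpotent ?trmx0.
- by rewrite block_l_Mmx // trmxX char_poly_Xn_nilpotent ?trmx0.
Qed.
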